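(* Fix $m\ge1$ and write $x=t_m$. Let $H^{(1)}(x),\dots,H^{(m)}(x)$ be arbitrary Laurent series of the form $H^{(a)}=z^a+\sum_{l\ge1}H^a_l(x)z^{-l}$ with coefficients smooth functions of $x$, and set $H^{(0)}=1$. Define $H^{(j)}$ for $j>m$ recursively by $$H^{(j+m)}=\Big(\frac{\partial}{\partial x}+H^{(m)}\Big)H^{(j)}-\sum_{l=1}^{j}H^m_lH^{(j-l)}-\sum_{l=1}^{m}H^j_lH^{(m-l)},\qquad j\ge0 .$$ Then each $H^{(j)}$ is of the form $z^j+\sum_{l\ge1}H^j_l(x)z^{-l}$, where the $H^j_l$ are differential polynomials in the coefficients of $H^{(1)},\dots,H^{(m)}$, and $x\mapsto(H^{(k)}(x))_{k\ge0}$ is an integral curve of $X_m$ in $\mathcal H$. Conversely, every integral curve of $X_m$ (parametrized by $x=t_m$) is obtained in this way from its first $m$ currents. Hence the space $\mathcal Q_m$ of orbits of $X_m$ is identified with the space of $m$-tuples $(H^{(1)}(x),\dots,H^{(m)}(x))$ of such Laurent series with arbitrary $x$-dependent coefficients.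
   Context: Let $z$ be a formal variable and $\mathcal L$ the space of formal Laurent series $\sum_{j\le N} l_j z^j$ (finitely many positive powers of $z$). Let $\mathcal H$ be the set of sequences $H=(H^{(k)})_{k\ge0}$ of elements of $\mathcal L$ with $H^{(0)}=1$ and, for $k\ge1$, $H^{(k)}=z^k+\sum_{l\ge1}H^k_l z^{-l}$; the coefficients $H^k_l$ are coordinates on $\mathcal H$, and we set $H^0_l=0$. The central system (CS) is the family of vector fields $X_j$, $j\ge1$, on $\mathcal H$, with associated times $t_j$, defined by $$\frac{\partial H^{(k)}}{\partial t_j}=H^{(j+k)}-H^{(j)}H^{(k)}+\sum_{l=1}^{k}H^j_lH^{(k-l)}+\sum_{l=1}^{j}H^k_lH^{(j-l)},\qquad k\ge0;$$ the right-hand side contains only negative powers of $z$, so this determines the components $X_j(H^k_l)$. *)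

From HB Require Import structures.
From mathcomp Require Import all_boot all_order all_algebra.
From mathcomp Require Import all_classical all_reals all_analysis.

Set Implicit Arguments.
Unset Strict Implicit.
Unset Printing Implicit Defensive.

Import Order.TTheory GRing.Theory Num.Theory.
Local Open Scope ring_scope.

(* Formal Laurent series with finitely many positive powers of z.            *)
(* [Laurent N s] represents  sum_{n >= 0} s n * z^(N - n).                    *)
(* Every such pair is a genuine element of the space L (finitely many        *)
(* positive powers); the representation is not unique, so series are         *)
(* compared through their coefficients [lcoef].                               *)
Record laurent (A : Type) := Laurent { ltop : int ; lseq : nat -> A }.

Section Laurent.
Variable A : comPzRingType.

Definition lcoef (f : laurent A) (p : int) : A :=
  if p <= ltop f then lseq f (absz (ltop f - p)) else 0.

Definition lzero : laurent A := Laurent 0 (fun _ => 0).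

Definition lmon (k : int) : laurent A :=
  Laurent k (fun n => if n == 0%N then 1 else 0).

Definition ladd (f g : laurent A) : laurent A :=
  let N := Num.max (ltop f) (ltop g) in
  Laurent N (fun n => lcoef f (N - n%:Z) + lcoef g (N - n%:Z)).

Definition lopp (f : laurent A) : laurent A :=
  Laurent (ltop f) (fun n => - lseq f n).

Definition lsub (f g : laurent A) : laurent A := ladd f (lopp g).

Definition lmul (f g : laurent A) : laurent A :=
  Laurent (ltop f + ltop g)
    (fun n => \sum_(i < n.+1) lseq f i * lseq g (n - i)%N).

Definition lscale (a : A) (f : laurent A) : laurent A :=
  Laurent (ltop f) (fun n => a * lseq f n).

Fixpoint lsum1 (n : nat) (F : nat -> laurent A) : laurent A :=
  match n with
  | 0%N => lzero
  | n'.+1 => ladd (lsum1 n' F) (F n)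
  end.

(* the series  z^k + sum_{l >= 1} c l * z^(-l)   (c 0 is ignored) *)
Definition hseries (k : nat) (c : nat -> A) : laurent A :=
  Laurent k%:Z (fun n => if n == 0%N then 1
                         else if (n <= k)%N then 0 else c (n - k)%N).

Definition negcoef (f : laurent A) (l : nat) : A := lcoef f (- l%:Z).

End Laurent.

Section CentralSystem.
Variable R : realType.

(* A point of H: P k l = H^k_l (k, l >= 1; other entries are ignored);
   H^(0) = 1 and H^(k) = z^k + sum_{l>=1} H^k_l z^(-l). *)
Definition pointH (P : nat -> nat -> R) (k : nat) : laurent R :=
  if k == 0%N then lmon R 0 else hseries k (P k).

(* right-hand side of the central system for d H^(k) / d t_j *)
Definition csRHS (A : comPzRingType) (H : nat -> laurent A) (j k : nat)
  : laurent A :=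
  ladd (ladd (lsub (H (j + k)%N) (lmul (H j) (H k)))
             (lsum1 k (fun l => lscale (negcoef (H j) l) (H (k - l)%N))))
       (lsum1 j (fun l => lscale (negcoef (H k) l) (H (j - l)%N))).

(* component X_j(H^k_l) of the vector field X_j at the point P *)
Definition Xfield (j k l : nat) (P : nat -> nat -> R) : R :=
  negcoef (csRHS (pointH P) j k) l.

Definition smooth (f : R -> R) : Prop :=
  forall (n : nat) (x : R), derivable (derive1n n f) x 1.

(* A curve x |-> (H^k_l(x)) in H, given by its coordinate functions
   C k l (k, l >= 1), is an integral curve of X_j (parametrized by x = t_j). *)
Definition is_integral_curve (j : nat) (C : nat -> nat -> R -> R) : Prop :=
  (forall k l, (0 < k)%N -> (0 < l)%N -> smooth (C k l)) /\
  (forall k l x, (0 < k)%N -> (0 < l)%N ->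
     derive1 (C k l) x = Xfield j k l (fun k' l' => C k' l' x)).

(* Laurent series with x-dependent coefficients: coefficient ring R -> R. *)
Definition lder (f : laurent (R -> R)) : laurent (R -> R) :=
  Laurent (ltop f) (fun n => derive1 (lseq f n)).

Definition recRHS (m : nat) (H : nat -> laurent (R -> R)) (j : nat)
  : laurent (R -> R) :=
  lsub (lsub (ladd (lder (H j)) (lmul (H m) (H j)))
             (lsum1 j (fun l => lscale (negcoef (H m) l) (H (j - l)%N))))
       (lsum1 m (fun l => lscale (negcoef (H j) l) (H (m - l)%N))).

(* Hhist m h n k = H^(k) for k < n, where H^(0) = 1,
   H^(a) = z^a + sum_l h a l z^(-l) for 1 <= a <= m, and
   H^(j+m) = recRHS m H j for j >= 1. *)
Fixpoint Hhist (m : nat) (h : nat -> nat -> R -> R) (n : nat)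
  : nat -> laurent (R -> R) :=
  match n with
  | 0%N => fun _ => lmon (R -> R) 0
  | n'.+1 => fun k =>
      if (k <= n')%N then Hhist m h n' k
      else if k == 0%N then lmon (R -> R) 0
      else if (k <= m)%N then hseries k (h k)
      else recRHS m (Hhist m h n') (k - m)%N
  end.

Definition Hrec (m : nat) (h : nat -> nat -> R -> R) (k : nat)
  : laurent (R -> R) := Hhist m h k.+1 k.

(* Differential polynomials (real constant coefficients) in the variables
   H^a_l; DVar a l n stands for the n-th x-derivative of H^a_l. *)
Inductive dpoly :=
  | DVar of nat & nat & nat
  | DConst of R
  | DAdd of dpoly & dpoly
  | DMul of dpoly & dpoly.

Fixpoint deval (h : nat -> nat -> R -> R) (p : dpoly) : R -> R :=
  match p with
  | DVar a l n => derive1n n (h a l)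
  | DConst c => fun _ => c
  | DAdd p q => fun x => deval h p x + deval h q x
  | DMul p q => fun x => deval h p x * deval h q x
  end.

Fixpoint dvars_in (m : nat) (p : dpoly) : Prop :=
  match p with
  | DVar a l n => (0 < a <= m)%N /\ (0 < l)%N
  | DConst _ => True
  | DAdd p q => dvars_in m p /\ dvars_in m q
  | DMul p q => dvars_in m p /\ dvars_in m q
  end.

End CentralSystem.

From HB Require Import structures.
From mathcomp Require Import all_boot all_order all_algebra.
From mathcomp Require Import all_classical all_reals all_analysis.
From mathcomp Require Import zify ring.
Import Order.TTheory GRing.Theory Num.Theory.
Local Open Scope ring_scope.

(* The recursion is the k-th equation of the flow of X_m solved for H^(m+k):
   writing that equation as dH^(k)/dx = H^(m+k) - Q(H)_{m,k}, with Q the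
   quadratic part of the central system, the recursion reads
   H^(m+k) = dH^(k)/dx + Q(H)_{m,k}.  So the curve it generates satisfies the
   flow equations by construction, and any integral curve satisfies the
   recursion, hence agrees with the curve generated by its first m currents
   (strong induction on k).  In Q(H)_{m,k} the two sums cancel exactly the
   mixed terms z^m H^k_l z^(-l) and z^k H^m_l z^(-l) of H^(m) H^(k), so the
   nonnegative part of H^(m+k) is z^(m+k); its coefficients are built from
   those of H^(1..m) by sums, products and x-derivatives, i.e. they are
   differential polynomials. *)

Lemma absz_subK (N q : int) : q <= N -> N - (absz (N - q)%R)%:Z = q.
Proof. by move=> h; lia. Qed.

Section LaurentCoefficients.
Context {A : comPzRingType}.
Implicit Types (f g : laurent A) (q : int).

Definition vanish_above (a : int) f := forall q, a < q -> lcoef f q = 0.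

Definition is_hseries (k : nat) f := forall q, 0 <= q -> lcoef f q = (q == k%:Z)%:R.

Lemma vanish_above_ltop f : vanish_above (ltop f) f.
Proof. by move=> q; rewrite /lcoef leNgt => ->. Qed.

Lemma vanish_above_le a b f : a <= b -> vanish_above a f -> vanish_above b f.
Proof. by move=> ab hf q hq; apply: hf; apply: le_lt_trans hq. Qed.

Lemma vanish_above_maxl {a} b {f} : vanish_above a f -> vanish_above (Num.max a b) f.
Proof. by apply: vanish_above_le; rewrite le_max lexx. Qed.

Lemma vanish_above_maxr a {b f} : vanish_above b f -> vanish_above (Num.max a b) f.
Proof. by apply: vanish_above_le; rewrite le_max lexx orbT. Qed.

Lemma lcoef_ladd f g q : lcoef (ladd f g) q = lcoef f q + lcoef g q.
Proof.
rewrite /ladd {1}/lcoef /=; set N := Num.max _ _.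
case: ifP => hq; first by rewrite absz_subK.
have gtN : N < q by rewrite ltNge hq.
have hf := vanish_above_maxl (ltop g) (vanish_above_ltop f).
have hg := vanish_above_maxr (ltop f) (vanish_above_ltop g).
by rewrite hf ?hg ?addr0.
Qed.

Lemma vanish_above_ladd a f g :
  vanish_above a f -> vanish_above a g -> vanish_above a (ladd f g).
Proof. by move=> hf hg q hq; rewrite lcoef_ladd hf ?hg ?addr0. Qed.

Lemma lcoef_lopp f q : lcoef (lopp f) q = - lcoef f q.
Proof. by rewrite /lcoef /=; case: ifP => //; rewrite oppr0. Qed.

Lemma lcoef_lsub f g q : lcoef (lsub f g) q = lcoef f q - lcoef g q.
Proof. by rewrite /lsub lcoef_ladd lcoef_lopp. Qed.

Lemma lcoef_lscale a f q : lcoef (lscale a f) q = a * lcoef f q.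
Proof. by rewrite /lcoef /=; case: ifP => //; rewrite mulr0. Qed.

Lemma lcoef_lmon k q : lcoef (lmon A k) q = (q == k)%:R.
Proof.
rewrite /lcoef /=; case: ifP => hq.
  have [->|neq] := eqVneq q k; first by rewrite subrr.
  by have -> : (absz (k - q)%R == 0%N) = false by lia.
by rewrite eq_sym lt_eqF // ltNge hq.
Qed.

Lemma lcoef_lzero q : lcoef (lzero A) q = 0.
Proof. by rewrite /lcoef /=; case: ifP. Qed.

Lemma lcoef_lsum1 n (F : nat -> laurent A) q :
  lcoef (lsum1 n F) q = \sum_(i < n) lcoef (F i.+1) q.
Proof.
elim: n => [|n IH] /=; first by rewrite big_ord0 lcoef_lzero.
by rewrite lcoef_ladd IH big_ord_recr.
Qed.

Lemma eq_lsum1 n (F F' : nat -> laurent A) :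
  (forall l, (0 < l <= n)%N -> F l = F' l) -> lsum1 n F = lsum1 n F'.
Proof.
elim: n => [|n IH] E //=; rewrite E ?leqnn // IH // => l /andP[l_gt0 l_le].
by rewrite E // l_gt0 leqW.
Qed.

Lemma lcoef_hseries k (c : nat -> A) q :
  lcoef (hseries k c) q = if 0 <= q then (q == k%:Z)%:R else c (absz q).
Proof.
rewrite /lcoef /=; case: (lerP q k) => hqk; last first.
  have -> : 0 <= q by lia.
  by have -> : (q == k%:Z) = false by lia.
case: (lerP 0 q) => hq0.
  have [->|neq] := eqVneq q k; first by rewrite subrr.
  have -> : (absz (k%:Z - q)%R == 0%N) = false by lia.
  by have -> : (absz (k%:Z - q)%R <= k)%N by lia.
have -> : (absz (k%:Z - q)%R == 0%N) = false by lia.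
have -> : (absz (k%:Z - q)%R <= k)%N = false by lia.
congr c; lia.
Qed.

Lemma hseries_is_hseries k (c : nat -> A) : is_hseries k (hseries k c).
Proof. by move=> q hq; rewrite lcoef_hseries hq. Qed.

Lemma negcoef_hseries k (c : nat -> A) l : (0 < l)%N -> negcoef (hseries k c) l = c l.
Proof.
move=> l_gt0; rewrite /negcoef lcoef_hseries.
have -> : (0 <= - l%:Z) = false by lia.
by congr c; lia.
Qed.

Lemma is_hseries_vanish_above k f : is_hseries k f -> vanish_above k f.
Proof. by move=> hf q hq; rewrite hf; [have -> : (q == k%:Z) = false by lia | lia]. Qed.

End LaurentCoefficients.

(* The Cauchy sum in [lmul] is indexed from the stored tops. Padding a factor
   to a larger top does not change the product, which gives the coefficient
   formula [lcoef_lmul] relative to any bounds a, b on the supports. *)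
Section LaurentProduct.
Context {A : comPzRingType}.
Implicit Types (f g : laurent A) (q : int).

Definition lpad (T : int) f := Laurent T (fun n => lcoef f (T - n%:Z)).

Lemma lcoef_lpad T f q : lcoef (lpad T f) q = if q <= T then lcoef f q else 0.
Proof. by rewrite /lcoef /=; case: ifP => // h; rewrite absz_subK. Qed.

Lemma lpad_ltop f : lpad (ltop f) f = f.
Proof.
case: f => t s; rewrite /lpad /=; congr Laurent; apply: funext => n.
rewrite /lcoef /=; have -> : t - n%:Z <= t by lia.
congr s; lia.
Qed.

Lemma lpad_lpad T a f : vanish_above a f -> lpad T (lpad a f) = lpad T f.
Proof.
move=> hf; rewrite /lpad; congr Laurent; apply: funext => n.
by rewrite lcoef_lpad; case: lerP => // h; rewrite hf.
Qed.

Lemma lcoef_lmul_shiftl f1 f0 g :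
  ltop f1 = ltop f0 + 1 -> lseq f1 0 = 0 -> (forall n, lseq f1 n.+1 = lseq f0 n) ->
  forall q, lcoef (lmul f1 g) q = lcoef (lmul f0 g) q.
Proof.
move=> ht h0 hS q; rewrite /lcoef /= ht.
case: (lerP q (ltop f0 + ltop g)) => h.
  have -> : q <= ltop f0 + 1 + ltop g by lia.
  have -> : absz (ltop f0 + 1 + ltop g - q)%R = (absz (ltop f0 + ltop g - q)%R).+1 by lia.
  rewrite big_ord_recl h0 mul0r add0r; apply: eq_bigr => i _.
  by rewrite /= hS subSS.
case: ifP => // h1.
have -> : absz (ltop f0 + 1 + ltop g - q)%R = 0%N by lia.
by rewrite big_ord1 h0 mul0r.
Qed.

Lemma lcoef_lmul_shiftr f g1 g0 :
  ltop g1 = ltop g0 + 1 -> lseq g1 0 = 0 -> (forall n, lseq g1 n.+1 = lseq g0 n) ->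
  forall q, lcoef (lmul f g1) q = lcoef (lmul f g0) q.
Proof.
move=> ht h0 hS q; rewrite /lcoef /= ht.
case: (lerP q (ltop f + ltop g0)) => h.
  have -> : q <= ltop f + (ltop g0 + 1) by lia.
  have -> : absz (ltop f + (ltop g0 + 1) - q)%R = (absz (ltop f + ltop g0 - q)%R).+1 by lia.
  rewrite big_ord_recr /= subnn h0 mulr0 addr0; apply: eq_bigr => i _.
  by rewrite subSn ?hS // -ltnS.
case: ifP => // h1.
have -> : absz (ltop f + (ltop g0 + 1) - q)%R = 0%N by lia.
by rewrite big_ord1 h0 mulr0.
Qed.

Lemma lcoef_lmul_lpadl d f g q :
  lcoef (lmul (lpad (ltop f + d%:Z) f) g) q = lcoef (lmul f g) q.
Proof.
elim: d q => [|d IH] q; first by rewrite addr0 lpad_ltop.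
rewrite -IH; apply: lcoef_lmul_shiftl => /=.
- lia.
- by rewrite vanish_above_ltop //; lia.
- by move=> n; congr lcoef; lia.
Qed.

Lemma lcoef_lmul_lpadr d f g q :
  lcoef (lmul f (lpad (ltop g + d%:Z) g)) q = lcoef (lmul f g) q.
Proof.
elim: d q => [|d IH] q; first by rewrite addr0 lpad_ltop.
rewrite -IH; apply: lcoef_lmul_shiftr => /=.
- lia.
- by rewrite vanish_above_ltop //; lia.
- by move=> n; congr lcoef; lia.
Qed.

Lemma lcoef_lmul_vanishl {a f} g q :
  vanish_above a f -> lcoef (lmul f g) q = lcoef (lmul (lpad a f) g) q.
Proof.
move=> hf; set T := a + (absz (ltop f - a)%R)%:Z.
have e1 : T = ltop f + (absz (T - ltop f)%R)%:Z by rewrite /T; lia.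
have e2 : T = ltop (lpad a f) + (absz (T - a)%R)%:Z by rewrite /T /=; lia.
rewrite -(lcoef_lmul_lpadl (absz (T - ltop f)%R)) -e1.
by rewrite -(lcoef_lmul_lpadl (absz (T - a)%R) (lpad a f)) -e2 lpad_lpad.
Qed.

Lemma lcoef_lmul_vanishr {b g} f q :
  vanish_above b g -> lcoef (lmul f g) q = lcoef (lmul f (lpad b g)) q.
Proof.
move=> hg; set T := b + (absz (ltop g - b)%R)%:Z.
have e1 : T = ltop g + (absz (T - ltop g)%R)%:Z by rewrite /T; lia.
have e2 : T = ltop (lpad b g) + (absz (T - b)%R)%:Z by rewrite /T /=; lia.
rewrite -(lcoef_lmul_lpadr (absz (T - ltop g)%R)) -e1.
by rewrite -(lcoef_lmul_lpadr (absz (T - b)%R) _ (lpad b g)) -e2 lpad_lpad.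
Qed.

Lemma lcoef_lmul {a b f g} q : vanish_above a f -> vanish_above b g ->
  lcoef (lmul f g) q = if q <= a + b then
    \sum_(i < (absz (a + b - q)%R).+1)
       lcoef f (a - i%:Z) * lcoef g (b - (absz (a + b - q)%R - i)%:Z) else 0.
Proof.
by move=> hf hg; rewrite (lcoef_lmul_vanishl _ _ hf) (lcoef_lmul_vanishr _ _ hg).
Qed.

Lemma lcoef_lmul_lmonl a g q : lcoef (lmul (lmon A a) g) q = lcoef g (q - a).
Proof.
rewrite /lcoef /=; case: (lerP q (a + ltop g)) => h; last first.
  by have -> : (q - a <= ltop g) = false by lia.
have -> : q - a <= ltop g by lia.
rewrite big_ord_recl /= mul1r big1 ?addr0; last by move=> i _; rewrite mul0r.
rewrite subn0; congr lseq; lia.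
Qed.

Lemma lcoef_lmul_lmonr b f q : lcoef (lmul f (lmon A b)) q = lcoef f (q - b).
Proof.
rewrite /lcoef /=; case: (lerP q (ltop f + b)) => h; last first.
  by have -> : (q - b <= ltop f) = false by lia.
have -> : q - b <= ltop f by lia.
rewrite big_ord_recr /= subnn eqxx mulr1 big1 ?add0r; first by congr lseq; lia.
move=> i _; have -> : (absz (ltop f + b - q)%R - i == 0)%N = false.
  by have := ltn_ord i; lia.
by rewrite mulr0.
Qed.

Lemma lcoef_lmulDl f f' g q :
  lcoef (lmul (ladd f f') g) q = lcoef (lmul f g) q + lcoef (lmul f' g) q.
Proof.
set a := Num.max (ltop f) (ltop f').
have hf := vanish_above_maxl (ltop f') (vanish_above_ltop f).
have hf' := vanish_above_maxr (ltop f) (vanish_above_ltop f').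
have hg := vanish_above_ltop g.
rewrite !(@lcoef_lmul a (ltop g)) //; last exact: vanish_above_ladd.
case: ifP => _; last by rewrite addr0.
by rewrite -big_split; apply: eq_bigr => i _; rewrite lcoef_ladd mulrDl.
Qed.

Lemma lcoef_lmulDr f g g' q :
  lcoef (lmul f (ladd g g')) q = lcoef (lmul f g) q + lcoef (lmul f g') q.
Proof.
set b := Num.max (ltop g) (ltop g').
have hg := vanish_above_maxl (ltop g') (vanish_above_ltop g).
have hg' := vanish_above_maxr (ltop g) (vanish_above_ltop g').
have hf := vanish_above_ltop f.
rewrite !(@lcoef_lmul (ltop f) b) //; last exact: vanish_above_ladd.
case: ifP => _; last by rewrite addr0.
by rewrite -big_split; apply: eq_bigr => i _; rewrite lcoef_ladd mulrDr.
Qed.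

Lemma eq_lcoef_lmul {f f' g g'} :
  lcoef f =1 lcoef f' -> lcoef g =1 lcoef g' -> lcoef (lmul f g) =1 lcoef (lmul f' g').
Proof.
move=> ef eg q.
have hf := vanish_above_ltop f; have hg := vanish_above_ltop g.
have hf' : vanish_above (ltop f) f' by move=> r hr; rewrite -ef hf.
have hg' : vanish_above (ltop g) g' by move=> r hr; rewrite -eg hg.
rewrite !(@lcoef_lmul (ltop f) (ltop g)) //.
by case: ifP => // _; apply: eq_bigr => i _; rewrite ef eg.
Qed.

(* With f = z^a + N_f and g = z^b + N_g, the product N_f N_g has only negative
   powers, so only z^(a+b) and the mixed terms z^a N_g, z^b N_f remain. *)
Lemma lcoef_lmul_hseries {a b : nat} {f g} : is_hseries a f -> is_hseries b g ->
  forall P : nat, lcoef (lmul f g) P = (P == (a + b)%N)%:R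
     + (if (P < a)%N then lcoef g (P%:Z - a%:Z) else 0)
     + (if (P < b)%N then lcoef f (P%:Z - b%:Z) else 0).
Proof.
move=> sf sg P.
pose Nf := lsub f (lmon A a); pose Ng := lsub g (lmon A b).
have ef : lcoef f =1 lcoef (ladd (lmon A a) Nf).
  by move=> q; rewrite lcoef_ladd lcoef_lsub addrC subrK.
have eg : lcoef g =1 lcoef (ladd (lmon A b) Ng).
  by move=> q; rewrite lcoef_ladd lcoef_lsub addrC subrK.
have bNf : vanish_above (-1) Nf.
  by move=> q hq; rewrite lcoef_lsub lcoef_lmon sf ?subrr //; lia.
have bNg : vanish_above (-1) Ng.
  by move=> q hq; rewrite lcoef_lsub lcoef_lmon sg ?subrr //; lia.
rewrite (eq_lcoef_lmul ef eg) lcoef_lmulDl !(lcoef_lmulDr _ (lmon A b) Ng).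
rewrite lcoef_lmul_lmonl !lcoef_lmul_lmonr lcoef_lmul_lmonl (lcoef_lmul _ bNf bNg).
have -> : (P%:Z <= -1 + -1) = false by lia.
rewrite addr0 lcoef_lmon !lcoef_lsub !lcoef_lmon.
have mixed : forall (c d : nat) (h : laurent A), is_hseries d h ->
    lcoef h (P%:Z - c%:Z) - (P%:Z - c%:Z == d%:Z)%:R
    = if (P < c)%N then lcoef h (P%:Z - c%:Z) else 0.
  move=> c d h sh; case: ltnP => hPc.
    have -> : (P%:Z - c%:Z == d%:Z) = false by lia.
    by rewrite subr0.
  by rewrite sh ?subrr //; lia.
rewrite -(mixed a b g) // -(mixed b a f) //.
by have -> : (P%:Z - a%:Z == b%:Z) = (P == (a + b)%N) by apply/eqP/eqP; lia.
Qed.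

Lemma lcoef_lsum1_hseries {j} (c : nat -> A) (G : nat -> laurent A) :
  (forall i, (i <= j)%N -> is_hseries i (G i)) ->
  forall P : nat, lcoef (lsum1 j (fun l => lscale (c l) (G (j - l)%N))) P
     = if (P < j)%N then c (j - P)%N else 0.
Proof.
move=> sG P; rewrite lcoef_lsum1.
under eq_bigr => i _ do rewrite lcoef_lscale sG ?leq_subr //.
case: (ltnP P j) => hPj; last first.
  rewrite big1 // => i _.
  have -> : (P%:Z == (j - i.+1)%N%:Z) = false by have := ltn_ord i; lia.
  by rewrite mulr0.
have hlt : (j - P.+1 < j)%N by lia.
rewrite (bigD1 (Ordinal hlt)) //= [X in _ + X]big1; last first.
  move=> i; rewrite -val_eqE /= => hi.
  have -> : (P%:Z == (j - i.+1)%N%:Z) = false by move: hi => /eqP; have := ltn_ord i; lia.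
  by rewrite mulr0.
have -> : (P%:Z == (j - (j - P.+1).+1)%N%:Z) by apply/eqP; lia.
rewrite mulr1 addr0; congr c; lia.
Qed.

Definition csQuad (H : nat -> laurent A) j k q :=
  lcoef (lmul (H j) (H k)) q
  - lcoef (lsum1 k (fun l => lscale (negcoef (H j) l) (H (k - l)%N))) q
  - lcoef (lsum1 j (fun l => lscale (negcoef (H k) l) (H (j - l)%N))) q.

Lemma lcoef_csRHS (H : nat -> laurent A) j k q :
  lcoef (csRHS H j k) q = lcoef (H (j + k)%N) q - csQuad H j k q.
Proof. by rewrite /csRHS /csQuad !lcoef_ladd ?lcoef_lsub ?lcoef_lopp; ring. Qed.

Lemma csQuad_hseries (H : nat -> laurent A) (j k P : nat) :
  (forall i, (i <= maxn j k)%N -> is_hseries i (H i)) ->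
  csQuad H j k P = (P == (j + k)%N)%:R.
Proof.
move=> sH.
rewrite /csQuad (lcoef_lmul_hseries (sH j _) (sH k _)) ?leq_maxl ?leq_maxr //.
rewrite (lcoef_lsum1_hseries (negcoef (H j))); last by move=> i hi; apply: sH; lia.
rewrite (lcoef_lsum1_hseries (negcoef (H k))); last by move=> i hi; apply: sH; lia.
have oppB : forall b : nat, (P < b)%N -> P%:Z - b%:Z = - (b - P)%N%:Z by move=> b; lia.
rewrite /negcoef; case: (ltnP P j) => hj; case: (ltnP P k) => hk;
  rewrite ?(oppB j) ?(oppB k) //; ring.
Qed.

End LaurentProduct.

Section Recursion.
Context {R : realType}.
Implicit Types (h : nat -> nat -> R -> R) (q : int).

Lemma natr_fctE n : (n%:R : R -> R) = cst n%:R.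
Proof. by rewrite natmulfctE. Qed.

Lemma derive1_natr n : derive1 (n%:R : R -> R) = 0.
Proof. by rewrite natr_fctE; apply: funext => x; rewrite derive1_cst. Qed.

Lemma lcoef_lder (f : laurent (R -> R)) q : lcoef (lder f) q = derive1 (lcoef f q).
Proof. by rewrite /lcoef /=; case: ifP => // _; rewrite -[0]/(0%:R) derive1_natr. Qed.

Variable m : nat.

Lemma Hhist_le h n k : (k <= n)%N -> Hhist m h n k = Hhist m h k k.
Proof.
elim: n => [|n IH] hk; first by move: hk; rewrite leqn0 => /eqP ->.
rewrite /=; case: leqP => hkn; first exact: IH.
have -> : k = n.+1 by lia.
by rewrite [in RHS]/= ltnn.
Qed.

Lemma Hrec_Hhist h k : Hrec m h k = Hhist m h k k.
Proof. exact: Hhist_le. Qed.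

Lemma recRHS_ext (H H' : nat -> laurent (R -> R)) j :
  (forall i, (i <= maxn j m)%N -> H i = H' i) -> recRHS m H j = recRHS m H' j.
Proof.
move=> E; rewrite /recRHS E ?leq_maxl // (E m) ?leq_maxr //.
congr (lsub (lsub _ _) _); apply: eq_lsum1 => l /andP[l_gt0 l_le]; rewrite E //; lia.
Qed.

Lemma Hrec0 h : Hrec m h 0 = lmon _ 0.
Proof. by []. Qed.

Lemma Hrec_init h k : (0 < k <= m)%N -> Hrec m h k = hseries k (h k).
Proof. by rewrite Hrec_Hhist; case: k => // k /andP[_ k_le] /=; rewrite ltnn k_le. Qed.

Lemma negcoef_Hrec_init h a l :
  (0 < a <= m)%N -> (0 < l)%N -> negcoef (Hrec m h a) l = h a l.
Proof. by move=> ha hl; rewrite Hrec_init // negcoef_hseries. Qed.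

Hypothesis m_gt0 : (0 < m)%N.

Lemma Hrec_rec h k : (m < k)%N -> Hrec m h k = recRHS m (Hrec m h) (k - m).
Proof.
rewrite Hrec_Hhist; case: k => // k hk /=; rewrite ltnn.
have -> : (k < m)%N = false by lia.
by apply: recRHS_ext => i hi; rewrite Hhist_le ?Hrec_Hhist //; lia.
Qed.

Lemma lcoef_recRHS (G : nat -> laurent (R -> R)) j q :
  lcoef (recRHS m G j) q = lcoef (lder (G j)) q + csQuad G m j q.
Proof. by rewrite /recRHS /csQuad !lcoef_ladd ?lcoef_lsub ?lcoef_lopp; ring. Qed.

Lemma Hrec_is_hseries h k : is_hseries k (Hrec m h k).
Proof.
elim: k {-2}k (leqnn k) => [|n IH] k hk q hq.
  by move: hk; rewrite leqn0 => /eqP ->; rewrite Hrec0 lcoef_lmon.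
case: (leqP k n) => hkn; first exact: IH.
case: (leqP k m) => hkm; first by rewrite Hrec_init ?hseries_is_hseries //; lia.
have [P ->] : exists P : nat, q = P%:Z by exists (absz q); lia.
rewrite Hrec_rec // lcoef_recRHS lcoef_lder (IH (k - m)%N) //; last by lia.
rewrite derive1_natr add0r csQuad_hseries => [|i hi]; last by apply: IH; lia.
by rewrite subnKC ?(ltnW hkm) //; congr (_%:R); apply/eqP/eqP; lia.
Qed.

End Recursion.

Section Evaluation.
Context {R : realType}.
Implicit Types (x : R) (F G : laurent (R -> R)) (f g : laurent R).

Definition is_lval x F f := forall q, lcoef f q = lcoef F q x.

Lemma is_lval_ladd x F G f g :
  is_lval x F f -> is_lval x G g -> is_lval x (ladd F G) (ladd f g).
Proof. by move=> hf hg q; rewrite !lcoef_ladd hf hg. Qed.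

Lemma is_lval_lscale x C c F f :
  c = C x -> is_lval x F f -> is_lval x (lscale C F) (lscale c f).
Proof. by move=> -> hf q; rewrite !lcoef_lscale hf. Qed.

Lemma is_lval_lmon x k : is_lval x (lmon (R -> R) k) (lmon R k).
Proof. by move=> q; rewrite !lcoef_lmon natr_fctE. Qed.

Lemma is_lval_lsum1 x n (Fs : nat -> laurent (R -> R)) (fs : nat -> laurent R) :
  (forall l, (0 < l <= n)%N -> is_lval x (Fs l) (fs l)) ->
  is_lval x (lsum1 n Fs) (lsum1 n fs).
Proof.
elim: n => [|n IH] E /=; first by move=> q; rewrite !lcoef_lzero.
apply: is_lval_ladd; last by apply: E; rewrite leqnn.
by apply: IH => l /andP[l_gt0 l_le]; apply: E; rewrite l_gt0 leqW.
Qed.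

Lemma is_lval_lmul x F G f g :
  is_lval x F f -> is_lval x G g -> is_lval x (lmul F G) (lmul f g).
Proof.
move=> hf hg q.
have bF := vanish_above_maxl (ltop f) (vanish_above_ltop F).
have bf := vanish_above_maxr (ltop F) (vanish_above_ltop f).
have bG := vanish_above_maxl (ltop g) (vanish_above_ltop G).
have bg := vanish_above_maxr (ltop G) (vanish_above_ltop g).
rewrite (lcoef_lmul _ bf bg) (lcoef_lmul _ bF bG).
by case: ifP => _ //; rewrite fct_sumE; apply: eq_bigr => i _; rewrite hf hg.
Qed.

Lemma csQuad_lval {x} {Hs : nat -> laurent (R -> R)} {hs : nat -> laurent R} {j k} q :
  (forall i, (i <= maxn j k)%N -> is_lval x (Hs i) (hs i)) ->
  csQuad hs j k q = csQuad Hs j k q x.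
Proof.
move=> E; rewrite /csQuad; congr (_ - _ - _).
- by apply: is_lval_lmul; apply: E; rewrite ?leq_maxl ?leq_maxr.
- apply: is_lval_lsum1 => l /andP[l_gt0 l_le]; apply: is_lval_lscale.
    by rewrite /negcoef (E j) ?leq_maxl.
  by apply: E; lia.
- apply: is_lval_lsum1 => l /andP[l_gt0 l_le]; apply: is_lval_lscale.
    by rewrite /negcoef (E k) ?leq_maxr.
  by apply: E; lia.
Qed.

Lemma pointH_pos (P : nat -> nat -> R) {i} : (0 < i)%N -> pointH P i = hseries i (P i).
Proof. by rewrite /pointH; case: i. Qed.

Lemma is_lval_pointH x F (P : nat -> nat -> R) i : (0 < i)%N -> is_hseries i F ->
  (forall l, (0 < l)%N -> P i l = negcoef F l x) -> is_lval x F (pointH P i).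
Proof.
move=> i_gt0 sF hP q; rewrite pointH_pos // lcoef_hseries.
case: ifP => hq; first by rewrite sF // natr_fctE.
rewrite hP /negcoef; last by lia.
by congr (lcoef F _ x); lia.
Qed.

End Evaluation.

Section IntegralCurves.
Context {R : realType}.
Variables (m : nat) (m_gt0 : (0 < m)%N).
Implicit Types (h C : nat -> nat -> R -> R).

Lemma Xfield_lval {Hs : nat -> laurent (R -> R)} {P : nat -> nat -> R} {x k} l :
  (forall i, (i <= maxn m k)%N -> is_lval x (Hs i) (pointH P i)) ->
  Xfield m k l P = negcoef (pointH P (m + k)) l - csQuad Hs m k (- l%:Z) x.
Proof. by move=> E; rewrite /Xfield /negcoef lcoef_csRHS (csQuad_lval _ E). Qed.

Lemma is_lval_Hrec h (P : nat -> nat -> R) x i :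
  ((0 < i)%N -> forall l, (0 < l)%N -> P i l = negcoef (Hrec m h i) l x) ->
  is_lval x (Hrec m h i) (pointH P i).
Proof.
case: i => [_|i hP]; first by rewrite Hrec0; apply: is_lval_lmon.
apply: is_lval_pointH => //; last exact: hP.
exact: Hrec_is_hseries.
Qed.

Lemma Hrec_Xfield h k l x : (0 < k)%N -> (0 < l)%N ->
  derive1 (negcoef (Hrec m h k) l) x
  = Xfield m k l (fun k' l' => negcoef (Hrec m h k') l' x).
Proof.
move=> k_gt0 l_gt0; set P := fun k' l' => _.
rewrite (Xfield_lval (Hs := Hrec m h) (x := x)) => [|i _]; last by apply: is_lval_Hrec.
rewrite /negcoef (@is_lval_Hrec h P x (m + k)) //.
rewrite (@Hrec_rec _ _ m_gt0 h (m + k)) ?addKn; last by lia.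
by rewrite lcoef_recRHS lcoef_lder addrfctE /= addrK.
Qed.

Lemma integral_curve_Hrec C : is_integral_curve m C ->
  forall k l, (0 < k)%N -> (0 < l)%N -> C k l = negcoef (Hrec m C k) l.
Proof.
move=> [_ hC] k; elim: k {-2}k (leqnn k) => [|n IH] k hkn l hk hl; first by lia.
case: (leqP k n) => h1; first exact: IH.
case: (leqP k m) => hkm; first by rewrite negcoef_Hrec_init // hk hkm.
set j := (k - m)%N; have ej : k = (m + j)%N by rewrite /j; lia.
apply: funext => x; set P := fun k' l' => C k' l' x.
have Ej : forall i, (i <= maxn m j)%N -> is_lval x (Hrec m C i) (pointH P i).
  move=> i hi; apply: is_lval_Hrec => i_gt0 l' hl'.
  by rewrite /P (IH i) //; lia.
have j_gt0 : (0 < j)%N by rewrite /j; lia.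
have flow := hC j l x j_gt0 hl.
have mj_gt0 : (0 < m + j)%N by lia.
rewrite (Xfield_lval _ Ej) (pointH_pos P mj_gt0) negcoef_hseries // in flow.
rewrite Hrec_rec // -/j /negcoef lcoef_recRHS lcoef_lder.
rewrite -[derive1 _]/(derive1 (negcoef (Hrec m C j) l)) -IH //; last by rewrite /j; lia.
by rewrite addrfctE /= flow subrK /P ej.
Qed.

End IntegralCurves.

Section DifferentialPolynomials.
Context {R : realType}.
Variable m : nat.
Implicit Types (h : nat -> nat -> R -> R) (p : dpoly R).

Fixpoint dderiv p : dpoly R :=
  match p with
  | DVar a l n => DVar R a l n.+1
  | DConst _ => DConst 0
  | DAdd p q => DAdd (dderiv p) (dderiv q)
  | DMul p q => DAdd (DMul (dderiv p) q) (DMul p (dderiv q))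
  end.

Definition smooth_currents h :=
  forall a l, (0 < a <= m)%N -> (0 < l)%N -> smooth (h a l).

Lemma dvars_in_dderiv p : dvars_in m p -> dvars_in m (dderiv p).
Proof. by elim: p => //= [p IHp q IHq|p IHp q IHq] [hp hq]; do ! split; auto. Qed.

Lemma deval_derive {h p} : smooth_currents h -> dvars_in m p -> forall x,
  derivable (deval h p) x 1 /\ derive1 (deval h p) x = deval h (dderiv p) x.
Proof.
move=> hh; elim: p => [a l n|c|p IHp q IHq|p IHp q IHq] /= hv x.
- by case: hv => ha hl; split => //; apply: (hh a l ha hl).
- by split; [apply: derivable_cst | apply: derive1_cst].
- case: hv => hp hq; have [dp ep] := IHp hp x; have [dq eq] := IHq hq x.
  change (deval h p \+ deval h q) with (deval h p + deval h q).
  split; first exact: derivableD.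
  by rewrite derive1E deriveD // -!derive1E ep eq.
- case: hv => hp hq; have [dp ep] := IHp hp x; have [dq eq] := IHq hq x.
  change (deval h p \* deval h q) with (deval h p * deval h q).
  split; first exact: derivableM.
  by rewrite derive1E deriveM // -!derive1E ep eq /GRing.scale /=; ring.
Qed.

Lemma deval_smooth {h p} : smooth_currents h -> dvars_in m p -> smooth (deval h p).
Proof.
move=> hh hv.
have iterE : forall n, derive1n n (deval h p) = deval h (iter n dderiv p)
                       /\ dvars_in m (iter n dderiv p).
  elim=> [|n [IH1 IH2]] //=; split; last exact: dvars_in_dderiv.
  rewrite -[LHS]/(derive1 (derive1n n (deval h p))) IH1.
  by apply: funext => x; have [_ ->] := deval_derive hh IH2 x.
by move=> n x; have [-> hv'] := iterE n; have [] := deval_derive hh hv' x.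
Qed.

Definition is_dpoly (F : (nat -> nat -> R -> R) -> R -> R) :=
  exists p, dvars_in m p /\ forall h, smooth_currents h -> F h = deval h p.

Definition dpoly_coefs (F : (nat -> nat -> R -> R) -> laurent (R -> R)) :=
  forall q, is_dpoly (fun h => lcoef (F h) q).

Lemma eq_is_dpoly {F F'} :
  (forall h, smooth_currents h -> F' h = F h) -> is_dpoly F -> is_dpoly F'.
Proof. by move=> E [p [hv hp]]; exists p; split => // h hh; rewrite E // hp. Qed.

Lemma is_dpoly_natr n : is_dpoly (fun _ => n%:R).
Proof. by exists (DConst n%:R); split => // h _; rewrite natmulfctE. Qed.

Lemma is_dpoly_var a l : (0 < a <= m)%N -> (0 < l)%N -> is_dpoly (fun h => h a l).
Proof. by exists (DVar R a l 0). Qed.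

Lemma is_dpolyD F G : is_dpoly F -> is_dpoly G -> is_dpoly (fun h => F h + G h).
Proof.
move=> [p [hp ep]] [q [hq eq]]; exists (DAdd p q); split => // h hh.
by rewrite ep // eq.
Qed.

Lemma is_dpolyM F G : is_dpoly F -> is_dpoly G -> is_dpoly (fun h => F h * G h).
Proof.
move=> [p [hp ep]] [q [hq eq]]; exists (DMul p q); split => // h hh.
by rewrite ep // eq.
Qed.

Lemma is_dpolyN F : is_dpoly F -> is_dpoly (fun h => - F h).
Proof.
move=> [p [hp ep]]; exists (DMul (DConst (-1)) p); split => // h hh.
by rewrite ep //; apply: funext => x /=; rewrite mulN1r.
Qed.

Lemma is_dpoly_sum n (F : 'I_n -> _) :
  (forall i, is_dpoly (F i)) -> is_dpoly (fun h => \sum_(i < n) F i h).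
Proof.
move=> E; rewrite -(fct_sumE _ _ F).
by apply: big_ind => //; [exact: (is_dpoly_natr 0) | exact: is_dpolyD].
Qed.

Lemma is_dpoly_derive1 F : is_dpoly F -> is_dpoly (fun h => derive1 (F h)).
Proof.
move=> [p [hp ep]]; exists (dderiv p); split; first exact: dvars_in_dderiv.
move=> h hh; rewrite ep //; apply: funext => x.
by have [_ ->] := deval_derive hh hp x.
Qed.

Lemma eq_dpoly_coefs {F F'} :
  (forall h, smooth_currents h -> lcoef (F' h) =1 lcoef (F h)) ->
  dpoly_coefs F -> dpoly_coefs F'.
Proof. by move=> E D q; apply: (eq_is_dpoly _ (D q)) => h hh; rewrite E. Qed.

Lemma dpoly_coefs_ladd F G :
  dpoly_coefs F -> dpoly_coefs G -> dpoly_coefs (fun h => ladd (F h) (G h)).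
Proof.
move=> DF DG q; apply: (eq_is_dpoly (F := fun h => lcoef (F h) q + lcoef (G h) q)).
  by move=> h _; rewrite lcoef_ladd.
exact: is_dpolyD.
Qed.

Lemma dpoly_coefs_lsub F G :
  dpoly_coefs F -> dpoly_coefs G -> dpoly_coefs (fun h => lsub (F h) (G h)).
Proof.
move=> DF DG q; apply: (eq_is_dpoly (F := fun h => lcoef (F h) q + - lcoef (G h) q)).
  by move=> h _; rewrite lcoef_lsub.
by apply: is_dpolyD => //; apply: is_dpolyN.
Qed.

Lemma dpoly_coefs_lscale C F :
  is_dpoly C -> dpoly_coefs F -> dpoly_coefs (fun h => lscale (C h) (F h)).
Proof.
move=> DC DF q; apply: (eq_is_dpoly (F := fun h => C h * lcoef (F h) q)).
  by move=> h _; rewrite lcoef_lscale.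
exact: is_dpolyM.
Qed.

Lemma dpoly_coefs_lsum1 n (F : _ -> nat -> laurent (R -> R)) :
  (forall l, (0 < l <= n)%N -> dpoly_coefs (fun h => F h l)) ->
  dpoly_coefs (fun h => lsum1 n (F h)).
Proof.
move=> E q; apply: (eq_is_dpoly (F := fun h => \sum_(i < n) lcoef (F h i.+1) q)).
  by move=> h _; rewrite lcoef_lsum1.
by apply: is_dpoly_sum => i; apply: E; have := ltn_ord i; lia.
Qed.

Lemma dpoly_coefs_lder F : dpoly_coefs F -> dpoly_coefs (fun h => lder (F h)).
Proof.
move=> DF q; apply: (eq_is_dpoly (F := fun h => derive1 (lcoef (F h) q))).
  by move=> h _; rewrite lcoef_lder.
exact: is_dpoly_derive1.
Qed.

Lemma dpoly_coefs_lmul {a b : int} {F G} :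
  (forall h, smooth_currents h -> vanish_above a (F h)) ->
  (forall h, smooth_currents h -> vanish_above b (G h)) ->
  dpoly_coefs F -> dpoly_coefs G -> dpoly_coefs (fun h => lmul (F h) (G h)).
Proof.
move=> bF bG DF DG q.
apply: (eq_is_dpoly (F := fun h => if q <= a + b then
    \sum_(i < (absz (a + b - q)%R).+1)
       lcoef (F h) (a - i%:Z) * lcoef (G h) (b - (absz (a + b - q)%R - i)%:Z) else 0%:R)).
  by move=> h hh; rewrite (lcoef_lmul _ (bF h hh) (bG h hh)).
case: (q <= a + b); last exact: is_dpoly_natr.
by apply: is_dpoly_sum => i; apply: is_dpolyM.
Qed.

Lemma dpoly_coefs_lmon k : dpoly_coefs (fun _ => lmon (R -> R) k).
Proof.
move=> q; apply: (eq_is_dpoly (F := fun _ => (q == k)%:R)); last exact: is_dpoly_natr.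
by move=> h _; rewrite lcoef_lmon.
Qed.

Lemma dpoly_coefs_hseries a : (0 < a <= m)%N -> dpoly_coefs (fun h => hseries a (h a)).
Proof.
move=> ha q.
apply: (eq_is_dpoly (F := fun h => if 0 <= q then (q == a%:Z)%:R else h a (absz q))).
  by move=> h _; rewrite lcoef_hseries.
by case: (lerP 0 q) => hq; [exact: is_dpoly_natr | apply: is_dpoly_var => //; lia].
Qed.

Lemma dpoly_coefs_Hrec (m_gt0 : (0 < m)%N) k : dpoly_coefs (fun h => Hrec m h k).
Proof.
elim: k {-2}k (leqnn k) => [|n IH] k hk.
  by move: hk; rewrite leqn0 => /eqP ->; apply: dpoly_coefs_lmon.
case: (leqP k n) => hkn; first exact: IH.
case: (leqP k m) => hkm.
  have k_range : (0 < k <= m)%N by lia.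
  apply: (eq_dpoly_coefs (F := fun h => hseries k (h k))); last exact: dpoly_coefs_hseries.
  by move=> h _ q; rewrite Hrec_init.
set j := (k - m)%N.
apply: (eq_dpoly_coefs (F := fun h => recRHS m (Hrec m h) j)).
  by move=> h _ q; rewrite Hrec_rec.
have D : forall i, (i <= n)%N -> dpoly_coefs (fun h => Hrec m h i) by move=> i; apply: IH.
have bd : forall (i : nat) h, smooth_currents h -> vanish_above i (Hrec m h i).
  by move=> i h _; apply/is_hseries_vanish_above/Hrec_is_hseries.
apply: dpoly_coefs_lsub; first apply: dpoly_coefs_lsub.
- apply: dpoly_coefs_ladd; first by apply/dpoly_coefs_lder/D; rewrite /j; lia.
  by apply: (dpoly_coefs_lmul (bd m) (bd j)); apply: D; rewrite /j; lia.
- apply: dpoly_coefs_lsum1 => l hl; apply: dpoly_coefs_lscale; last by apply: D; rewrite /j; lia.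
  by apply: D; lia.
- apply: dpoly_coefs_lsum1 => l hl; apply: dpoly_coefs_lscale; last by apply: D; lia.
  by apply: D; rewrite /j; lia.
Qed.

End DifferentialPolynomials.

Theorem mainTheorem8 (R : realType) (m : nat) (hm : (1 <= m)%N) :
  (* shape of H^(j) and differential polynomiality of its coefficients *)
  (exists P : nat -> nat -> dpoly R,
     (forall j l, dvars_in m (P j l)) /\
     forall h : nat -> nat -> R -> R,
       (forall a l, (0 < a <= m)%N -> (0 < l)%N -> smooth (h a l)) ->
       forall j : nat,
         (forall p : int, 0 <= p -> lcoef (Hrec m h j) p = (p == j%:Z)%:R) /\
         (forall l : nat, (0 < l)%N -> negcoef (Hrec m h j) l = deval h (P j l)))
  /\
  (* the resulting curve is an integral curve of X_m *)
  (forall h : nat -> nat -> R -> R,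
     (forall a l, (0 < a <= m)%N -> (0 < l)%N -> smooth (h a l)) ->
     is_integral_curve m (fun k l => negcoef (Hrec m h k) l))
  /\
  (* its first m currents are the given ones *)
  (forall h : nat -> nat -> R -> R,
     (forall a l, (0 < a <= m)%N -> (0 < l)%N -> smooth (h a l)) ->
     forall a l, (0 < a <= m)%N -> (0 < l)%N -> negcoef (Hrec m h a) l = h a l)
  /\
  (* conversely every integral curve of X_m arises from its first m currents *)
  (forall C : nat -> nat -> R -> R,
     is_integral_curve m C ->
     forall k l, (0 < k)%N -> (0 < l)%N -> C k l = negcoef (Hrec m C k) l).
Proof.
have coefs_dpoly (jl : nat * nat) : exists p : dpoly R, dvars_in m p /\
    forall h, smooth_currents m h -> negcoef (Hrec m h jl.1) jl.2 = deval h p.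
  exact: dpoly_coefs_Hrec.
have [P hP] := choice coefs_dpoly.
split.
  exists (fun j l => P (j, l)); split=> [j l|h hh j]; first by case: (hP (j, l)).
  split; first exact: Hrec_is_hseries.
  by move=> l _; case: (hP (j, l)) => _ ->.
split.
  move=> h hh; split=> [k l _ _|k l x k_gt0 l_gt0]; last exact: Hrec_Xfield.
  by case: (hP (k, l)) => hv ->; [exact: (@deval_smooth R m h _ hh hv) | exact: hh].
split; first by move=> h _ a l ha hl; apply: negcoef_Hrec_init.
exact: integral_curve_Hrec.
Qed.
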